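(* Let $(X,d)$ be a nonempty compact homogeneous metric space of diameter $D$, and let $m$ be a Borel probability measure on $X$ invariant under all isometries. Let $A=\int_{X\times X} d(x,y)\,d(m\times m)(x,y)$ and $\mu=1-(m\times m)(\Delta)$, where $\Delta$ is the diagonal of $X\times X$. If $A=\mu D$, then $X$ is finite, $d(x,y)=D$ for all $x\neq y$ in $X$ (i.e. $d$ is $D$ times the discrete metric), and $m$ is the uniform probability measure on $X$.
   Context: A metric space is homogeneous if its isometry group acts transitively on its points. *)

From HB Require Import structures.
From mathcomp Require Import all_boot all_order all_algebra.
From mathcomp Require Import all_classical all_reals all_analysis.
Set Implicit Arguments. Unset Strict Implicit. Unset Printing Implicit Defensive.
Import Order.TTheory GRing.Theory Num.Theory.
Local Open Scope classical_set_scope.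
Local Open Scope ring_scope.

Definition is_metric {R : realType} {T : Type} (dist : T -> T -> R) : Prop :=
  [/\ forall x y, 0 <= dist x y,
      forall x y, dist x y = 0 <-> x = y,
      forall x y, dist x y = dist y x &
      forall x y z, dist x z <= dist x y + dist y z].

Definition dopen {R : realType} {T : Type} (dist : T -> T -> R) (U : set T) : Prop :=
  forall x, U x -> exists2 e : R, 0 < e & [set y | dist x y < e] `<=` U.

Definition dcompact {R : realType} {T : Type} (dist : T -> T -> R) : Prop :=
  forall F : set (set T), (forall U, F U -> dopen dist U) ->
    (forall x, exists2 U, F U & U x) ->
    exists s : seq (set T), (forall U, U \in s -> F U) /\
                            (forall x, exists2 U, U \in s & U x).

Definition metric_isometry {R : realType} {T : Type} (dist : T -> T -> R) (f : T -> T) : Prop :=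
  bijective f /\ forall x y, dist (f x) (f y) = dist x y.

Definition homogeneous {R : realType} {T : Type} (dist : T -> T -> R) : Prop :=
  forall x y : T, exists2 f, metric_isometry dist f & f x = y.

Definition diam {R : realType} {T : Type} (dist : T -> T -> R) : R :=
  sup [set r | exists x y, r = dist x y].

Definition diagonal_set {T : Type} : set (T * T) := [set p | p.1 = p.2].

From HB Require Import structures.
From mathcomp Require Import all_boot all_order all_algebra.
From mathcomp Require Import all_classical all_reals all_analysis.
From mathcomp Require Import measurable_realfun finmap lra.
Import Order.TTheory GRing.Theory Num.Theory.
Local Open Scope classical_set_scope.
Local Open Scope ring_scope.

(* Since dist <= D everywhere and dist = 0 on the diagonal, the mean
   distance A is at most mu D. If dist x y < D for some x <> y, a small box
   ball(x, r) x ball(y, r) lies off the diagonal and carries distances bounded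
   away from D; it has positive measure because in a compact homogeneous space
   all balls of radius r have the same measure and finitely many of them cover
   the space. Hence A < mu D, a contradiction. So d is D times the discrete
   metric: every set is open (in particular measurable), compactness makes X
   finite, and invariance gives all points the same mass. *)

Definition dball {R : realType} {T : Type} (dist : T -> T -> R) (x : T) (r : R) :
  set T := [set y | dist x y < r].

Section metric.
Context {R : realType} {T : choiceType} {dist : T -> T -> R}.
Hypothesis dist_metric : is_metric dist.

Lemma dist_ge0 x y : 0 <= dist x y. Proof. by case: dist_metric. Qed.
Lemma dist_sym x y : dist x y = dist y x. Proof. by case: dist_metric. Qed.
Lemma dist_triangle x y z : dist x z <= dist x y + dist y z.
Proof. by case: dist_metric. Qed.
Lemma dist_eq0 x y : dist x y = 0 <-> x = y. Proof. by case: dist_metric. Qed.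
Lemma dist_xx x : dist x x = 0. Proof. exact/dist_eq0. Qed.

Lemma dist_gt0 {x y} : x <> y -> 0 < dist x y.
Proof. by move=> xy; rewrite lt_def dist_ge0 andbT; apply/eqP => /dist_eq0. Qed.

Lemma dopen_dball x r : dopen dist (dball dist x r).
Proof.
move=> y; rewrite /dball /= => xy; exists (r - dist x y); first by rewrite subr_gt0.
by move=> z; rewrite /dball /= => yz; have := dist_triangle x y z; lra.
Qed.

Lemma dball_center x r : 0 < r -> dball dist x r x.
Proof. by rewrite /dball /= dist_xx. Qed.

Lemma dist_dball2 {x y a b r} : dball dist x r a -> dball dist y r b ->
  dist x y - 2 * r < dist a b < dist x y + 2 * r.
Proof.
rewrite /dball /= => xa yb; apply/andP; split.
- have := dist_triangle x a y; have := dist_triangle a b y.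
  rewrite (dist_sym b y); lra.
- have := dist_triangle a x b; have := dist_triangle x y b.
  rewrite (dist_sym a x); lra.
Qed.

Lemma separated_dopen {e : R} : 0 < e ->
  (forall x y, x <> y -> e <= dist x y) -> forall U, dopen dist U.
Proof.
move=> e_gt0 sep U x Ux; exists e => // y /=.
by have [<-//|xy] := pselect (x = y); rewrite ltNge sep.
Qed.

Hypothesis dist_compact : dcompact dist.

Lemma dcompact_finite_net {r : R} : 0 < r ->
  exists s : seq T, forall x, exists2 z, z \in s & dist z x < r.
Proof.
move=> r0; have [|x|U [Uballs Ucover]] :=
  dist_compact [set U | exists z, U = dball dist z r].
- by move=> _ [z ->]; exact: dopen_dball.
- by exists (dball dist x r); [exists x | exact: dball_center].
suff [s sU] : exists s : seq T,
    forall V, V \in U -> exists2 z : T, z \in s & V = dball dist z r.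
  by exists s => x; have [V /sU [z zs ->] Vx] := Ucover x; exists z.
elim: U Uballs {Ucover} => [|V U IH] VUballs; first by exists [::].
have [|s sU] := IH; first by move=> W WU; apply: VUballs; rewrite in_cons WU orbT.
have [z Vz] := VUballs V (mem_head _ _).
exists (z :: s) => W; rewrite in_cons => /orP [/eqP ->|/sU [w ws ->]].
  by exists z; rewrite ?mem_head.
by exists w; rewrite // in_cons ws orbT.
Qed.

Lemma separated_finite {e : R} : 0 < e ->
  (forall x y, x <> y -> e <= dist x y) -> finite_set [set: T].
Proof.
move=> e_gt0 sep; have [s snet] := dcompact_finite_net e_gt0.
apply: sub_finite_set (finite_seq s) => x _; have [z zs zx] := snet x.
by have [<-//|zx'] := pselect (z = x); move: zx; rewrite ltNge sep.
Qed.

Lemma dist_bounded : exists M, forall x y, dist x y <= M.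
Proof.
have [s snet] := dcompact_finite_net (@ltr01 R).
exists (\big[Num.max/0]_(z <- s) \big[Num.max/0]_(w <- s) dist z w + 2) => x y.
have [z zs zx] := snet x; have [w ws wy] := snet y.
have zw : dist z w <= \big[Num.max/0]_(z <- s) \big[Num.max/0]_(w <- s) dist z w.
  apply: le_trans (le_bigmax_seq 0 w xpredT (dist z) ws isT) _.
  exact: (le_bigmax_seq 0 z xpredT (fun z => \big[Num.max/0]_(w <- s) dist z w) zs isT).
have := dist_triangle x z y; have := dist_triangle z w y.
rewrite (dist_sym x z); lra.
Qed.

Lemma dist_le_diam x y : dist x y <= diam dist.
Proof.
have [M Mub] := dist_bounded.
apply: sup_upper_bound; last by exists x, y.
by split; [exists (dist x y), x, y | exists M => _ [a [b ->]]].
Qed.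

End metric.

(* Unlike [ge0_le_integral], no measurability is required: the distance is not
   known to be measurable for the product sigma-algebra. *)
Lemma ge0_le_integralT d (X : measurableType d) (R : realType)
  (mu : {measure set X -> \bar R}) (f g : X -> \bar R) :
  (forall x, 0 <= f x)%E -> (forall x, f x <= g x)%E ->
  (\int[mu]_x f x <= \int[mu]_x g x)%E.
Proof.
move=> f0 fg; have g0 x : (0 <= g x)%E by apply: le_trans (fg x).
rewrite !ge0_integralTE //; apply: ereal_sup_le => y [h hf <-].
by exists h => //= x; exact: le_trans (hf x) (fg x).
Qed.

Lemma ge0_integralZl_indic d (X : measurableType d) (R : realType)
  (mu : {measure set X -> \bar R}) (c : R) (A : set X) :
  0 <= c -> measurable A -> (\int[mu]_x (c * \1_A x)%:E = c%:E * mu A)%E.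
Proof.
move=> c0 mA; under eq_integral => x _ do rewrite EFinM.
rewrite ge0_integralZl_EFin //.
- by rewrite integral_indic // setIT.
- exact/measurable_EFinP/measurable_indic.
Qed.

Section metric_measure.
Context {R : realType} {d : measure_display} {T : measurableType d}
  {dist : T -> T -> R}.
Hypothesis dist_metric : is_metric dist.
Hypothesis dist_borel : (measurable : set (set T)) = <<s dopen dist >>.
Hypothesis dist_compact : dcompact dist.

Lemma dopen_measurable {U} : dopen dist U -> measurable U.
Proof. by move=> oU; rewrite dist_borel; exact: sub_gen_smallest. Qed.

Lemma measurable_dball x r : measurable (dball dist x r).
Proof. exact/dopen_measurable/dopen_dball. Qed.

(* The diagonal is the intersection over n of the finite unions of the squares
   of the balls of a 1/(2(n+1))-net. *)
Lemma measurable_diagonal : measurable (diagonal_set : set (T * T)).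
Proof.
pose r n : R := n.+1%:R^-1 / 2.
have r_gt0 n : 0 < r n by rewrite divr_gt0.
have net n := cid (dcompact_finite_net dist_metric dist_compact (r_gt0 n)).
pose S n := \bigcup_(z in [set` sval (net n)])
  (dball dist z (r n) `*` dball dist z (r n)).
have -> : diagonal_set = \bigcap_n S n.
  rewrite /diagonal_set; apply/seteqP.
  split=> -[x y] /=; [move=> <- n _|move=> Sxy].
    by have [z zs zx] := svalP (net n) x; exists z.
  have [//|xy] := pselect (x = y).
  have [k] := ltr_add_invr (dist_gt0 dist_metric xy); rewrite add0r.
  have [z _ [/= zx zy]] := Sxy k I; have /andP[_] := dist_dball2 dist_metric zx zy.
  rewrite (dist_xx dist_metric) add0r /r mulrCA divff // mulr1.
  by move=> /lt_trans/[apply]; rewrite ltxx.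
apply: bigcapT_measurable => n; apply: fin_bigcup_measurable => [|z _].
  exact: finite_seq.
by apply: measurableX; exact: measurable_dball.
Qed.

Lemma integral_dist_le (mu : probability (T * T)%type R) {B : set (T * T)}
    {c : R} :
  measurable B -> B `<=` ~` diagonal_set -> 0 <= c -> c <= diam dist ->
  (forall p, B p -> dist p.1 p.2 <= c) ->
  (\int[mu]_p (dist p.1 p.2)%:E
     <= (diam dist)%:E * mu (~` diagonal_set `\` B) + c%:E * mu B)%E.
Proof.
move=> mB Boff c0 cD Bc; have D0 := le_trans c0 cD.
set C := ~` diagonal_set `\` B.
have mC : measurable C.
  by apply: measurableD mB; apply: measurableC; exact: measurable_diagonal.
pose g p := diam dist * \1_C p + c * \1_B p.
have dist_le_g p : dist p.1 p.2 <= g p.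
  rewrite /g !indicE; have [Bp|nBp] := pselect (B p).
    by rewrite (mem_set Bp) memNset ?mulr0 ?add0r ?mulr1 ?Bc // => -[].
  rewrite (memNset nBp) mulr0 addr0; have [pdiag|poff] := pselect (diagonal_set p).
    by rewrite pdiag (dist_xx dist_metric) mulr_ge0 // lern1.
  by rewrite mem_set ?mulr1 ?(dist_le_diam dist_metric dist_compact).
have mg (k : R) (A : set (T * T)) : measurable A ->
    measurable_fun setT (fun p => (k * \1_A p)%:E).
  by move=> mA; exact/measurable_EFinP/measurable_funM/measurable_indic.
apply: le_trans (@ge0_le_integralT _ _ _ _ _ (fun p => (g p)%:E) _ _) _.
- by move=> p; rewrite lee_fin (dist_ge0 dist_metric).
- by move=> p; rewrite lee_fin.
rewrite /g; under eq_integral => p _ do rewrite EFinD.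
rewrite ge0_integralD ?ge0_integralZl_indic //.
- by move=> p _; rewrite lee_fin mulr_ge0 // lern1.
- exact: mg.
- by move=> p _; rewrite lee_fin mulr_ge0 // lern1.
- exact: mg.
Qed.

Lemma integral_dist_lt (P : probability (T * T)%type R) {B : set (T * T)}
    {c : R} :
  measurable B -> B `<=` ~` diagonal_set -> (0 < P B)%E ->
  0 <= c -> c < diam dist ->
  (forall p, B p -> dist p.1 p.2 <= c) ->
  (\int[P]_p (dist p.1 p.2)%:E < (1 - P diagonal_set) * (diam dist)%:E)%E.
Proof.
move=> mB Boff PB_gt0 c0 cD Bc.
have mC : measurable (~` diagonal_set `\` B).
  by apply: measurableD mB; apply: measurableC; exact: measurable_diagonal.
have offdiag_split : (1 - P diagonal_set = P (~` diagonal_set `\` B) + P B)%E.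
  rewrite -probability_setC; last exact: measurable_diagonal.
  by rewrite -{1}(setDUK Boff) measureU ?setDIK // addeC.
apply: le_lt_trans (integral_dist_le P mB Boff c0 (ltW cD) Bc) _.
rewrite offdiag_split.
rewrite -(fineK (fin_num_measure P _ mB)) in PB_gt0 *.
rewrite -(fineK (fin_num_measure P _ mC)).
rewrite lte_fin in PB_gt0; rewrite -?EFinD -!EFinM -?EFinD lte_fin.
have gap_gt0 : 0 < diam dist - c by rewrite subr_gt0.
by have := mulr_gt0 PB_gt0 gap_gt0; nra.
Qed.

Hypothesis dist_homogeneous : homogeneous dist.
Variable m : probability T R.
Hypothesis m_invariant : forall f, metric_isometry dist f ->
  forall A, measurable A -> m (f @^-1` A) = m A.

Lemma measure_dball_homogeneous x z r : m (dball dist x r) = m (dball dist z r).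
Proof.
have [f f_iso <-] := dist_homogeneous z x.
rewrite -(m_invariant _ f_iso); last exact: measurable_dball.
congr (m _).
by apply/seteqP; split => y; rewrite /dball /= f_iso.2.
Qed.

Lemma measure_set1_homogeneous x z : measurable [set x] -> m [set x] = m [set z].
Proof.
have [f f_iso <-] := dist_homogeneous z x => mx.
rewrite -(m_invariant _ f_iso _ mx); congr (m _).
by apply/seteqP; split => y /=; [exact: (bij_inj f_iso.1) | move->].
Qed.

Lemma measure_dball_gt0 x (r : R) : 0 < r -> (0 < m (dball dist x r))%E.
Proof.
move=> r_gt0; rewrite lt0e measure_ge0 andbT; apply/eqP => mx0.
have [s snet] := dcompact_finite_net dist_metric dist_compact r_gt0.
have : (m setT <= \sum_(z \in [set` s]) m (dball dist z r))%E.
  apply: content_sub_fsum => // [z _|y _]; first exact: measurable_dball.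
  by have [z zs zy] := snet y; exists z.
rewrite fsbig1 => [|z _]; last by rewrite (measure_dball_homogeneous z x).
by rewrite probability_setT lee_fin ler10.
Qed.

Hypothesis mean_dist : (\int[m \x m]_p (dist p.1 p.2)%:E
  = (1 - (m \x m) diagonal_set) * (diam dist)%:E)%E.

Lemma dist_eq_diam x y : x <> y -> dist x y = diam dist.
Proof.
move=> xy; apply/eqP; rewrite eq_le dist_le_diam //= leNgt; apply/negP => dxy_lt.
set D := diam dist in dxy_lt *; set d0 := dist x y in dxy_lt *.
have d0_gt0 : 0 < d0 := dist_gt0 dist_metric xy.
have [r r_gt0 [r_d0 r_D]] : exists2 r : R, 0 < r & 4 * r <= d0 /\ 4 * r <= D - d0.
  by case: (leP d0 (D - d0)) => h;
    [exists (d0 / 4) | exists ((D - d0) / 4)]; try split; lra.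
pose B := dball dist x r `*` dball dist y r.
have mB : measurable B by apply: measurableX; exact: measurable_dball.
have B_offdiag : B `<=` ~` diagonal_set.
  move=> [a b] [/= xa yb]; rewrite /diagonal_set /= => ab.
  have /andP[] := dist_dball2 dist_metric xa yb.
  by rewrite ab (dist_xx dist_metric) -/d0; lra.
have B_dist p : B p -> dist p.1 p.2 <= d0 + 2 * r.
  by case: p => a b [/= xa yb]; have /andP[_ /ltW] := dist_dball2 dist_metric xa yb.
have c_ge0 : 0 <= d0 + 2 * r by lra.
have c_lt_D : d0 + 2 * r < D by lra.
(* Going through [P] makes all occurrences of the product measure syntactically
   equal, so that [mean_dist] can be rewritten with. *)
pose P : probability (T * T)%type R := (m \x m)%E.
have PB_gt0 : (0 < P B)%E.
  suff mmB_gt0 : (0 < (m \x m) B)%E by exact: mmB_gt0.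
  rewrite product_measure1E; try exact: measurable_dball.
  by rewrite mule_gt0 ?measure_dball_gt0.
have mean_distP : (\int[P]_p (dist p.1 p.2)%:E
  = (1 - P diagonal_set) * (diam dist)%:E)%E := mean_dist.
have := integral_dist_lt P mB B_offdiag PB_gt0 c_ge0 c_lt_D B_dist.
by rewrite mean_distP ltxx.
Qed.

End metric_measure.

Lemma probability_uniform d (X : measurableType d) (R : realType)
    (P : probability X R) :
  finite_set [set: X] -> (forall A : set X, measurable A) ->
  (forall a b : X, P [set a] = P [set b]) ->
  forall A : set X, P A = ((#|` fset_set A|)%:R / (#|` fset_set [set: X]|)%:R)%:E.
Proof.
move=> Xfin Xmeas P1 A.
have [x0 _] : [set: X] !=set0.
  apply/set0P/negP => /eqP X0; have := probability_setT P.
  by rewrite X0 measure0 => -[] /eqP; rewrite eq_sym oner_eq0.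
pose c := fine (P [set x0]).
have PE B : finite_set B -> P B = ((#|` fset_set B|)%:R * c)%:E.
  move=> Bfin; rewrite -[in LHS](image_id B) -bigcup_imset1.
  rewrite measure_fin_bigcup // => [|i j _ _ [z [/= -> ->]]//].
  rewrite (eq_fsbigr (fun=> c%:E)) => [|i _]; last first.
    by apply: etrans (P1 i x0) _; rewrite /c fineK // fin_num_measure.
  rewrite fsumEFin // fsbig_finite // big_const_seq count_predT iter_addr addr0.
  by rewrite mulr_natl.
have := PE _ Xfin; rewrite probability_setT => -[T1].
have T0 : (#|` fset_set [set: X]|)%:R != 0 :> R.
  by apply/eqP => T0; move: T1; rewrite T0 mul0r => /eqP; rewrite oner_eq0.
rewrite PE; last exact: sub_finite_set (@subsetT _ A) Xfin.
by rewrite -[c](mulKf T0) -T1 mulr1.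
Qed.

Theorem proposition2p3 (R : realType) (dsp : measure_display)
  (T : measurableType dsp) (dist : T -> T -> R) (m : probability T R) :
  is_metric dist ->
  (measurable : set (set T)) = <<s dopen dist >> ->
  dcompact dist ->
  homogeneous dist ->
  (forall f, metric_isometry dist f -> forall A, measurable A -> m (f @^-1` A) = m A) ->
  (\int[m \x m]_p (dist p.1 p.2)%:E
     = (1 - (m \x m) diagonal_set) * (diam dist)%:E)%E ->
  [/\ finite_set [set: T],
      (forall x y : T, x <> y -> dist x y = diam dist) &
      (forall A : set T,
         m A = ((#|` fset_set A|)%:R / (#|` fset_set [set: T]|)%:R)%:E)].
Proof.
move=> dist_metric dist_borel dist_compact dist_hom m_inv mean_dist.
have dist_diam :=
  dist_eq_diam dist_metric dist_borel dist_compact dist_hom m m_inv mean_dist.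
have [e e_gt0 sep] : exists2 e : R, 0 < e & forall x y, x <> y -> e <= dist x y.
  have [D_gt0|D_le0] := ltP 0 (diam dist).
    by exists (diam dist) => // x y /dist_diam ->.
  exists 1 => // x y xy; have := dist_gt0 dist_metric xy; rewrite dist_diam //; lra.
have Xfin := separated_finite dist_metric dist_compact e_gt0 sep.
have Xmeas A : measurable A :=
  dopen_measurable dist_borel (separated_dopen e_gt0 sep A).
split => //; apply: probability_uniform => // a b.
exact: measure_set1_homogeneous dist_hom m m_inv a b (Xmeas _).
Qed.
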